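(* Let $x_0\in\mathbb{R}$. If $\liminf_{n\to\infty}\big(p_n(x_0)^2+p_{n+1}(x_0)^2\big)^{1/n}>1$, then $\displaystyle \frac{p_n(x_0)^2}{K_n(x_0,x_0)}$ does not tend to $0$ as $n\to\infty$.
   Context: Let $\rho$ be a probability measure on $\mathbb{R}$ with compact but infinite support, $p_n$ ($n\ge0$) its orthonormal polynomials (real coefficients, positive leading coefficient, $p_0=1$), and $K_n(x,y)=\sum_{j=0}^n p_j(x)p_j(y)$. *)

From Stdlib Require Import Reals List.
Open Scope R_scope.

(* Polynomials with real coefficients, as coefficient lists
   [c_0; c_1; ...; c_d]  (c_i is the coefficient of x^i). *)
Fixpoint peval (c : list R) (x : R) : R :=
  match c with
  | nil => 0
  | a :: c' => a + x * peval c' x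
  end.

Fixpoint lsum (n : nat) (f : nat -> R) : R :=
  match n with
  | O => 0
  | S k => lsum k f + f k
  end.

(* The measure rho is represented by its moment sequence m n = int x^n drho.
   The L^2(rho) inner product of two polynomials is then
   <p,q> = sum_{i,j} p_i q_j m(i+j). *)
Definition inner (m : nat -> R) (p q : list R) : R :=
  lsum (length p) (fun i => lsum (length q)
    (fun j => nth i p 0 * nth j q 0 * m (i + j)%nat)).

(* m is the moment sequence of a probability measure on R with compact but
   infinite support:  m 0 = 1 (probability), <c,c> > 0 for every nonzero
   polynomial c (infinite support), and |m n| <= M^n (support in [-M,M]).
   By the Hamburger/Hausdorff moment theorems these are exactly such
   moment sequences. *)
Definition compact_infinite_prob_moments (m : nat -> R) : Prop :=
  m 0%nat = 1 /\
  (forall c : list R, (exists i, nth i c 0 <> 0) -> 0 < inner m c c) /\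
  (exists M : R, 0 <= M /\ forall n, Rabs (m n) <= M ^ n).

Definition orthonormal_polys (m : nat -> R) (P : nat -> list R) : Prop :=
  (forall n, length (P n) = S n /\ 0 < nth n (P n) 0) /\
  (forall i j, inner m (P i) (P j) = if Nat.eqb i j then 1 else 0).

Definition Kern (P : nat -> list R) (n : nat) (x y : R) : R :=
  lsum (S n) (fun j => peval (P j) x * peval (P j) y).

(* liminf_{n->oo} u n > c, written out: some r > c is eventually a lower
   bound of u (this is exactly liminf u > c, in the extended reals). *)
Definition liminf_gt (u : nat -> R) (c : R) : Prop :=
  exists r, c < r /\ exists N, forall n, (N <= n)%nat -> r <= u n.

(* Write [K_n = a_0 + ... + a_n] with [a_j = p_j(x0)^2].  If [a_n / K_n -> 0],
   then for every [d > 0] eventually [K_n (1 - d) <= K_(n-1)], so [K_n] grows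
   more slowly than [(1 - d)^(-n)].  On the other hand the liminf hypothesis
   gives [K_(n+1) >= a_n + a_(n+1) >= r^n] for some [r > 1]; taking [d] with
   [r (1 - d) > 1] yields a contradiction.  The only property of the
   polynomials used is [K_n > 0], which holds since [p_0] is a nonzero
   constant. *)
From Stdlib Require Import Reals List Lra Lia.
Open Scope R_scope.

Lemma lsum_ext n f g : (forall j, f j = g j) -> lsum n f = lsum n g.
Proof. intros Hfg; induction n as [|n IH]; simpl; [reflexivity | now rewrite IH, Hfg]. Qed.

Lemma lsum_nonneg n f : (forall j, 0 <= f j) -> 0 <= lsum n f.
Proof. intros Hf; induction n as [|n IH]; simpl; [lra | specialize (Hf n); lra]. Qed.

Lemma lsum_first_le n f : (forall j, 0 <= f j) -> f 0%nat <= lsum (S n) f.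
Proof. intros Hf; induction n as [|n IH]; simpl in *; [lra | specialize (Hf (S n)); lra]. Qed.

Lemma pow_le_of_le_Rpower_inv_INR (r s : R) (n : nat) :
  (1 <= n)%nat -> 1 < r -> r <= Rpower s (/ INR n) -> r ^ n <= s.
Proof.
  intros Hn Hr Hrs.
  destruct (Rlt_dec 0 s) as [Hs | Hs].
  - assert (Hroot : Rpower s (/ INR n) ^ n = s).
    { rewrite <- Rpower_pow by (unfold Rpower; apply exp_pos).
      rewrite Rpower_mult, Rinv_l by (apply not_0_INR; lia).
      now apply Rpower_1. }
    rewrite <- Hroot. apply pow_incr. lra.
  - (* [ln s = 0] for [s <= 0], so [Rpower s _ = 1 < r]. *)
    exfalso. unfold Rpower, ln in Hrs.
    destruct (Rlt_dec 0 s); [contradiction |].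
    rewrite Rmult_0_r, exp_0 in Hrs. lra.
Qed.

Lemma geometric_decay (s : nat -> R) (c : R) (N : nat) :
  0 <= c -> (forall n, (N <= n)%nat -> s (S n) * c <= s n) ->
  forall k, s (N + k)%nat * c ^ k <= s N.
Proof.
  intros Hc Hstep k; induction k as [|k IH].
  - rewrite Nat.add_0_r; simpl; lra.
  - rewrite Nat.add_succ_r; simpl pow.
    assert (Hck : 0 <= c ^ k) by now apply pow_le.
    specialize (Hstep (N + k)%nat ltac:(lia)).
    assert (s (S (N + k)) * c * c ^ k <= s (N + k)%nat * c ^ k)
      by (apply Rmult_le_compat_r; assumption).
    lra.
Qed.

Section PartialSums.

Variable a : nat -> R.
Hypothesis a_nonneg : forall j, 0 <= a j.
Hypothesis a0_pos : 0 < a 0%nat.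

Lemma lsum_succ_pos n : 0 < lsum (S n) a.
Proof. pose proof (lsum_first_le n a a_nonneg); lra. Qed.

Lemma partial_sums_ratio_bound :
  Un_cv (fun n => a n / lsum (S n) a) 0 ->
  forall d, 0 < d -> exists N, forall n, (N <= n)%nat ->
    lsum (S n) a * (1 - d) <= lsum n a.
Proof.
  intros Hcv d Hd. destruct (Hcv d Hd) as [N HN]. exists N; intros n Hn.
  specialize (HN n Hn). unfold R_dist in HN.
  pose proof (lsum_succ_pos n) as Hpos.
  assert (Hquot : a n / lsum (S n) a * lsum (S n) a = a n) by (field; lra).
  rewrite Rminus_0_r, Rabs_right in HN.
  - change (lsum (S n) a) with (lsum n a + a n) in *. nra.
  - apply Rle_ge, Rmult_le_pos; [apply a_nonneg |].
    left; now apply Rinv_0_lt_compat.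
Qed.

Lemma not_ratio_to_zero_of_exp_growth (r : R) (N : nat) :
  1 < r -> (forall n, (N <= n)%nat -> r ^ n <= a n + a (S n)) ->
  ~ Un_cv (fun n => a n / lsum (S n) a) 0.
Proof.
  intros Hr Hgrow Hcv.
  (* [d] is chosen so that [r * (1 - d) = (r + 1) / 2 > 1]. *)
  set (d := (r - 1) / (2 * r)).
  assert (Hd : 0 < d < 1).
  { assert (d * (2 * r) = r - 1) by (unfold d; field; lra). nra. }
  set (c := 1 - d).
  assert (Hrc : r * c = (r + 1) / 2) by (unfold c, d; field; lra).
  destruct (partial_sums_ratio_bound Hcv d (proj1 Hd)) as [N2 Hratio].
  set (M := Nat.max N N2).
  assert (Hdecay : forall k, lsum (M + k) a * c ^ k <= lsum M a)
    by (apply (geometric_decay (fun n => lsum n a));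
        [unfold c; lra | intros n Hn; apply Hratio; lia]).
  assert (Hlower : forall k, r ^ k <= lsum (M + S (S k)) a).
  { intro k.
    replace (M + S (S k))%nat with (S (S (M + k))) by lia. simpl lsum.
    pose proof (lsum_nonneg (M + k) a a_nonneg).
    pose proof (Hgrow (M + k)%nat ltac:(lia)).
    assert (r ^ k <= r ^ (M + k)) by (apply Rle_pow; lia || lra).
    lra. }
  destruct (Pow_x_infinity (r * c) ltac:(rewrite Rabs_right; lra)
              (lsum M a / c ^ 2 + 1)) as [K HK].
  specialize (HK K (le_n K)).
  rewrite Rabs_right in HK by (apply Rle_ge, pow_le; lra).
  specialize (Hdecay (S (S K))). specialize (Hlower K).
  assert (Hc2 : 0 < c ^ 2) by (apply pow_lt; unfold c; lra).
  assert (Hck : 0 <= c ^ S (S K)) by (apply pow_le; unfold c; lra).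
  assert (Hprod : (r * c) ^ K * c ^ 2 <= lsum M a).
  { rewrite Rpow_mult_distr, Rmult_assoc, <- pow_add, Nat.add_comm.
    apply Rle_trans with (lsum (M + S (S K)) a * c ^ S (S K)); [| assumption].
    apply Rmult_le_compat_r; assumption. }
  assert (Hscaled : (lsum M a / c ^ 2 + 1) * c ^ 2 <= (r * c) ^ K * c ^ 2)
    by (apply Rmult_le_compat_r; lra).
  assert (lsum M a / c ^ 2 * c ^ 2 = lsum M a) by (field; unfold c; lra).
  lra.
Qed.

End PartialSums.

Theorem theorem3p2 (m : nat -> R) (P : nat -> list R) (x0 : R) :
  compact_infinite_prob_moments m ->
  orthonormal_polys m P ->
  liminf_gt (fun n => Rpower ((peval (P n) x0) ^ 2 + (peval (P (S n)) x0) ^ 2)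
                             (/ INR n)) 1 ->
  ~ Un_cv (fun n => (peval (P n) x0) ^ 2 / Kern P n x0 x0) 0.
Proof.
  intros _ [Hdeg _] [r [Hr [N Hliminf]]] Hcv.
  set (a := fun j => peval (P j) x0 ^ 2).
  assert (Ha : forall j, 0 <= a j) by (intro j; apply pow2_ge_0).
  assert (Ha0 : 0 < a 0%nat).
  { destruct (Hdeg 0%nat) as [Hlen Hlead]. unfold a.
    destruct (P 0%nat) as [| c [| ? ?]]; simpl in *; try discriminate. nra. }
  apply (not_ratio_to_zero_of_exp_growth a Ha Ha0 r (S N) Hr).
  - intros n Hn. apply pow_le_of_le_Rpower_inv_INR; [lia | lra |].
    apply Hliminf. lia.
  - intros e He. destruct (Hcv e He) as [N' HN']. exists N'. intros n Hn.
    replace (lsum (S n) a) with (Kern P n x0 x0)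
      by (apply lsum_ext; intro j; unfold a; ring).
    exact (HN' n Hn).
Qed.
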